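(* Fix $n$, generators $x_{i_1},\dots,x_{i_k}\in\mathcal{B}_n$, an index $j$, integers $a_h$ ($h\ne j$), and set $V(e)=V_n(x_{i_1}^{a_1}\cdots x_{i_j}^{e}\cdots x_{i_k}^{a_k})$ for $e\in\mathbb{Z}$. Suppose $\deg V(e+1)\le\deg V(e)$ for some $e$. Then for all $m\ge1$, $\deg V(e+m+1)>1+\deg V(e+m)$, and for all $m\ge2$, $\deg V(e+m)=\deg V(e)+3m-2$ and $V(e+m)$ has the same leading coefficient as $V(e)$.
   Context: $\mathcal{B}_n$ is the Artin braid group with generators $x_1,\dots,x_{n-1}$; $V_n(\beta)$ is the Jones polynomial of the closure of $\beta$, normalized by $V(\text{unknot})=1$, $q^{-1}V_{L_+}-qV_{L_-}=(q^{1/2}-q^{-1/2})V_{L_0}$, as a Laurent polynomial in $s=q^{-1/2}$. Conventions: closures of $\alpha x_i^{e+2}\gamma$, $\alpha x_i^{e+1}\gamma$, $\alpha x_i^{e}\gamma$ play the roles of $L_-,L_0,L_+$ (e.g. the closure of $x_1^2\in\mathcal B_2$ has Jones polynomial $-s-s^5$). For a nonzero Laurent polynomial, $\deg$ is its highest exponent and the leading coefficient is the coefficient of that term. *)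

(* Jones polynomial of braid closures, computed by the
   Kauffman-bracket / Temperley-Lieb state sum, written directly in the
   variable s = q^{-1/2} (= A^2 in Kauffman's notation). *)
From mathcomp Require Import all_boot all_order all_algebra.
Set Implicit Arguments. Unset Strict Implicit. Unset Printing Implicit Defensive.
Import Order.TTheory GRing.Theory Num.Theory.
Local Open Scope ring_scope.

(* A Laurent polynomial is represented by a (not necessarily reduced) list
   of monomials (exponent, coefficient); its value is the sum of them. *)
Definition laurent := seq (int * int).

Definition lcoef (p : laurent) (k : int) : int :=
  foldr (fun m acc => if m.1 == k then m.2 + acc else acc) 0 p.

Definition lone : laurent := [:: (0, 1)].
Definition ladd (p q : laurent) : laurent := p ++ q.
Definition lmul (p q : laurent) : laurent :=
  [seq (a.1 + b.1, a.2 * b.2) | a <- p, b <- q].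
Definition lpow (p : laurent) (m : nat) : laurent := iter m (lmul p) lone.
Definition lsum (ps : seq laurent) : laurent := flatten ps.

Definition lsupport (p : laurent) : seq int :=
  [seq k <- undup (map fst p) | lcoef p k != 0].

(* degree = highest exponent with nonzero coefficient (0 for the zero
   polynomial, a case that never occurs for Jones polynomials) *)
Definition ldeg (p : laurent) : int :=
  match lsupport p with
  | [::] => 0
  | k :: ks => foldr Num.max k ks
  end.

Definition llead (p : laurent) : int := lcoef p (ldeg p).

(* A letter (i, true) is the generator x_i, (i, false) is x_i^{-1};
   x_i (1 <= i <= n-1) acts on strand positions i-1 and i (0-based). *)
Definition letter := (nat * bool)%type.

Definition gen_pow (i : nat) (a : int) : seq letter :=
  match a with
  | Posz m => nseq m (i, true)
  | Negz m => nseq m.+1 (i, false)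
  end.

Definition braid_word (w : seq (nat * int)) : seq letter :=
  flatten [seq gen_pow p.1 p.2 | p <- w].

Definition merge_edge (lab : seq nat) (uv : nat * nat) : seq nat :=
  let a := nth 0%N lab uv.1 in
  let b := nth 0%N lab uv.2 in
  [seq (if x == b then a else x) | x <- lab].

Definition ncomponents (N : nat) (E : seq (nat * nat)) : nat :=
  size (undup (foldl merge_edge (iota 0 N) E)).

(* vertex (t, p), level t in 0..c, position p in 0..n-1, coded as t*n+p.
   At level t, letter on positions i-1,i is smoothed either by the identity
   (b = false) or by the cup-cap e_i (b = true). *)
Definition vtx (n t p : nat) : nat := (t * n + p)%N.

Definition level_edges (n t i : nat) (b : bool) : seq (nat * nat) :=
  [seq (vtx n t p, vtx n t.+1 p) | p <- iota 0 n & (p != i.-1) && (p != i)] ++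
  (if b then [:: (vtx n t i.-1, vtx n t i); (vtx n t.+1 i.-1, vtx n t.+1 i)]
   else [:: (vtx n t i.-1, vtx n t.+1 i.-1); (vtx n t i, vtx n t.+1 i)]).

Definition closure_edges (n c : nat) : seq (nat * nat) :=
  [seq (vtx n c p, vtx n 0 p) | p <- iota 0 n].

Definition state_loops (n : nat) (w : seq letter) (st : seq bool) : nat :=
  let c := size w in
  ncomponents (c.+1 * n)
    (flatten [seq level_edges n t (nth (0%N, true) w t).1 (nth false st t)
             | t <- iota 0 c] ++ closure_edges n c).

Fixpoint all_states (c : nat) : seq (seq bool) :=
  match c with
  | 0 => [:: [::]]
  | c'.+1 => [seq b :: s | b <- [:: false; true], s <- all_states c']
  end.

Definition ldelta : laurent := [:: (1, -1); (-1, -1)].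

(* weight of a letter with sign eps under a smoothing:
   combining A^{+-1} bracket weights with the writhe factor (-A^3)^{-w}
   and A^2 = s:  x_i : id -> -s, e -> -s^2 ;  x_i^-1 : id -> -s^-1, e -> -s^-2 *)
Definition letter_weight (l : letter) (b : bool) : laurent :=
  let eps : int := if l.2 then 1 else -1 in
  if b then [:: (eps *+ 2, -1)] else [:: (eps, -1)].

Definition state_weight (w : seq letter) (st : seq bool) : laurent :=
  foldr lmul lone [seq letter_weight lb.1 lb.2 | lb <- zip w st].

(* V_n(beta): Jones polynomial of the closure of beta in B_n, normalized by
   V(unknot) = 1 and q^{-1} V_+ - q V_- = (q^{1/2}-q^{-1/2}) V_0, with
   s = q^{-1/2}; the generator x_i is the crossing for which closures of
   a x_i^{e+2} g, a x_i^{e+1} g, a x_i^e g play L_-, L_0, L_+. *)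
Definition jones (n : nat) (w : seq (nat * int)) : laurent :=
  let bw := braid_word w in
  lsum [seq lmul (state_weight bw st) (lpow ldelta (state_loops n bw st).-1)
       | st <- all_states (size bw)].

(* The Kauffman state sum defining [jones] satisfies, coefficientwise, the
   skein relation V(e+2) = s^4 V(e) + (s^3 - s) V(e+1).  To see it, expand the
   crossings of x_i^2 into their two smoothings: a crossing smoothed by the
   identity can be deleted from the diagram, while two stacked cup-caps enclose
   one extra loop (e_i^2 = delta e_i).  Jones polynomials never vanish, since
   they take the value 1 at a primitive cube root of unity.  So if
   deg V(e+1) <= deg V(e), the term s^4 V(e) dominates V(e+2), whose degree is
   deg V(e) + 4 with the same leading coefficient; from then on
   deg V(e+m+1) > deg V(e+m) + 1, the term s^3 V(e+m+1) dominates, and each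
   step raises the degree by exactly 3 keeping the leading coefficient. *)

From Stdlib Require Import Relation_Operators.
From mathcomp Require Import all_boot all_order all_algebra.
From mathcomp Require Import zify ring.
Import Order.TTheory GRing.Theory Num.Theory.
Set Implicit Arguments. Unset Strict Implicit. Unset Printing Implicit Defensive.

(** * Connected components *)

Definition linked (E : seq (nat * nat)) : nat -> nat -> Prop :=
  clos_refl_sym_trans nat (fun x y => (x, y) \in E).

Definition edges_within (N : nat) (E : seq (nat * nat)) :=
  forall e, e \in E -> (e.1 < N)%N /\ (e.2 < N)%N.

Section Linked.
Variable E : seq (nat * nat).

Lemma linked_edge x y : (x, y) \in E -> linked E x y.
Proof. exact: rst_step. Qed.

Lemma linked_edgeV x y : (y, x) \in E -> linked E x y.
Proof. by move=> /linked_edge; apply: rst_sym. Qed.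

Lemma linked_map E' (f : nat -> nat) :
  (forall u v, (u, v) \in E -> linked E' (f u) (f v)) ->
  forall x y, linked E x y -> linked E' (f x) (f y).
Proof.
move=> Ef x y; elim=> {x y} [u v /Ef //|u|u v _|u v w _ IHuv _ IHvw].
- exact: rst_refl.
- exact: rst_sym.
- exact: rst_trans IHuv IHvw.
Qed.

Lemma linked_sub E' x y : {subset E <= E'} -> linked E x y -> linked E' x y.
Proof. by move=> sEE'; apply: (linked_map (f := id)) => u v /sEE'; apply: rst_step. Qed.

Lemma linked_invariant (T : Type) (f : nat -> T) :
  (forall u v, (u, v) \in E -> f u = f v) -> forall x y, linked E x y -> f x = f y.
Proof. by move=> Ef x y; elim=> {x y} [u v /Ef|u|u v _ ->|u v w _ -> _ ->]. Qed.

Lemma linked_within N x y :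
  edges_within N E -> linked E x y -> x = y \/ (x < N)%N /\ (y < N)%N.
Proof.
move=> EN; elim=> {x y} [u v /EN|u|u v _ IH|u v w _ IHuv _ IHvw].
- by right.
- by left.
- by case: IH => [->|[]]; [left|right].
- by case: IHuv => [->|[? ?]]; case: IHvw => [<-|[? ?]]; [left|right..].
Qed.

End Linked.

Definition component_labels N E (lab : seq nat) :=
  size lab = N /\
  forall x y, (x < N)%N -> (y < N)%N ->
    (nth 0%N lab x == nth 0%N lab y) <-> linked E x y.

Lemma component_labels_merge_edge N E lab u v :
  edges_within N E -> (u < N)%N -> (v < N)%N -> component_labels N E lab ->
  component_labels N (rcons E (u, v)) (merge_edge lab (u, v)).
Proof.
move=> EN uN vN [size_lab lab_linked]; rewrite /merge_edge /=.
set E' := rcons E (u, v).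
set f := fun z => if z == nth 0%N lab v then nth 0%N lab u else z.
have sEE' : {subset E <= E'} by move=> e; rewrite mem_rcons in_cons orbC => ->.
have uv' : (u, v) \in E' by rewrite mem_rcons mem_head.
split=> [|x y xN yN]; first by rewrite size_map.
rewrite !(nth_map 0%N) ?size_lab //; split.
- pose rep z := if nth 0%N lab z == nth 0%N lab v then u else z.
  have repP z : (z < N)%N ->
      [/\ (rep z < N)%N, linked E' z (rep z) & f (nth 0%N lab z) = nth 0%N lab (rep z)].
    rewrite /rep /f => zN; case: ifP => [/eqP lab_zv|_]; last by split=> //; apply: rst_refl.
    split=> //; apply: rst_trans (linked_edgeV uv').
    by apply: linked_sub sEE' _; apply/lab_linked => //; apply/eqP.
  have [rxN xrx ->] := repP x xN; have [ryN yry ->] := repP y yN.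
  move=> /(lab_linked _ _ rxN ryN) /(linked_sub sEE') rxy.
  apply: rst_trans xrx _; apply: rst_trans rxy _; exact: rst_sym.
- move=> /(linked_invariant (f := fun z => f (nth 0%N lab z))) -> //.
  move=> a b; rewrite mem_rcons in_cons => /orP [/eqP [-> ->]|ab].
    by rewrite /f eqxx; case: ifP.
  have [aN bN] := EN _ ab.
  by have /(lab_linked _ _ aN bN) /eqP -> := linked_edge ab.
Qed.

Lemma component_labels_ncomponents N E :
  edges_within N E -> component_labels N E (foldl merge_edge (iota 0 N) E).
Proof.
rewrite -[E in foldl _ _ E]cat0s -[E in component_labels _ E]cat0s.
elim/last_ind: E => [|E [u v] IH] EN.
- split=> [|x y xN yN]; first by rewrite size_iota.
  rewrite !nth_iota // !add0n; split=> [/eqP ->|]; first exact: rst_refl.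
  by move=> /(linked_invariant (f := id)) -> //.
- have EN' : edges_within N E by move=> e eE; apply: EN; rewrite mem_rcons in_cons eE orbT.
  have [uN vN] : (u < N)%N /\ (v < N)%N by apply: (EN (u, v)); rewrite mem_rcons mem_head.
  by rewrite foldl_rcons; apply: component_labels_merge_edge => //; apply: IH.
Qed.

Lemma size_undup_map_kernel (T1 T2 : eqType) (f : nat -> T1) (g : nat -> T2) s :
  {in s &, forall x y, (f x == f y) = (g x == g y)} ->
  size (undup (map f s)) = size (undup (map g s)).
Proof.
elim: s => [//|x s IH] fg /=.
have fg' : {in s &, forall x y, (f x == f y) = (g x == g y)}.
  by move=> a b a_s b_s; apply: fg; rewrite in_cons ?a_s ?b_s orbT.
have -> : (f x \in map f s) = (g x \in map g s).
  by apply/mapP/mapP=> -[y y_s /eqP]; [rewrite fg|rewrite -fg];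
    rewrite ?mem_head ?in_cons ?y_s ?orbT // => /eqP; exists y.
by case: ifP => _ /=; rewrite IH.
Qed.

Lemma ncomponentsE N E (T : eqType) (g : nat -> T) :
  edges_within N E ->
  (forall x y, (x < N)%N -> (y < N)%N -> (g x == g y) <-> linked E x y) ->
  ncomponents N E = size (undup (map g (iota 0 N))).
Proof.
move=> EN g_linked; have [size_lab lab_linked] := component_labels_ncomponents EN.
rewrite /ncomponents; set lab := foldl _ _ _ in size_lab lab_linked *.
rewrite -[lab in undup lab](mkseq_nth 0%N) size_lab.
apply: size_undup_map_kernel => x y; rewrite !mem_iota !add0n => xN yN.
have [to_linked_lab from_linked_lab] := lab_linked _ _ xN yN.
have [to_linked_g from_linked_g] := g_linked _ _ xN yN.
by apply/idP/idP => [/to_linked_lab/from_linked_g|/to_linked_g/from_linked_lab].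
Qed.

Lemma ncomponents_iso N E M F (phi psi : nat -> nat) :
  edges_within N E -> edges_within M F ->
  (forall x, (x < N)%N -> (phi x < M)%N) -> (forall y, (y < M)%N -> (psi y < N)%N) ->
  (forall u v, (u, v) \in E -> linked F (phi u) (phi v)) ->
  (forall u v, (u, v) \in F -> linked E (psi u) (psi v)) ->
  (forall x, (x < N)%N -> linked E x (psi (phi x))) ->
  (forall y, (y < M)%N -> linked F y (phi (psi y))) ->
  ncomponents N E = ncomponents M F.
Proof.
move=> EN FM phiN psiM phiE psiF psi_phi phi_psi.
have [size_lab lab_linked] := component_labels_ncomponents FM.
set lab := foldl _ _ _ in size_lab lab_linked.
rewrite (@ncomponentsE M F _ (nth 0%N lab)) // (@ncomponentsE N E _ (nth 0%N lab \o phi)) //.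
  apply: perm_size; apply: uniq_perm; rewrite ?undup_uniq // => z.
  rewrite !mem_undup; apply/mapP/mapP => -[x]; rewrite mem_iota add0n /= => xN ->.
    by exists (phi x); rewrite ?mem_iota ?phiN.
  exists (psi x); first by rewrite mem_iota psiM.
  by apply/eqP/lab_linked; rewrite ?phiN ?psiM //; exact: phi_psi.
move=> x y xN yN /=; rewrite (lab_linked _ _ (phiN _ xN) (phiN _ yN)); split.
- move=> /(linked_map psiF) linked_psi.
  apply: rst_trans (psi_phi _ xN) _; apply: rst_trans linked_psi _.
  exact/rst_sym/psi_phi.
- exact: linked_map.
Qed.

Lemma ncomponents_isolated M E :
  edges_within M E -> ncomponents M.+1 E = (ncomponents M E).+1.
Proof.
move=> EM; have EM1 : edges_within M.+1 E by move=> e /EM [? ?]; split; apply: ltnW.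
have [size_lab lab_linked] := component_labels_ncomponents EM.
set lab := foldl _ _ _ in size_lab lab_linked.
pose g x := if (x < M)%N then Some (nth 0%N lab x) else None.
have gM : map g (iota 0 M) = map (Some \o nth 0%N lab) (iota 0 M).
  by apply/eq_in_map => x; rewrite mem_iota add0n /g /= => ->.
rewrite (@ncomponentsE M.+1 E _ g) // ?(@ncomponentsE M E _ (nth 0%N lab)) //.
  rewrite -addn1 iotaD add0n map_cat /= cats1 undup_rcons size_rcons.
  rewrite (_ : [seq y <- _ | _] = undup (map g (iota 0 M))) /=; last first.
    by apply/all_filterP/allP => z; rewrite mem_undup gM => /mapP [x _ ->]; rewrite /g ltnn.
  by rewrite gM map_comp (undup_map_inj (@Some_inj _)) size_map.
move=> x y xM1 yM1; rewrite /g.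
case: (ltnP x M) => xM; case: (ltnP y M) => yM.
- by rewrite (inj_eq Some_inj); apply: lab_linked.
- split=> // /(linked_within EM) [xy|[_]]; last by rewrite ltnNge yM.
  by move: xM; rewrite xy ltnNge yM.
- split=> // /(linked_within EM) [xy|[]]; last by rewrite ltnNge xM.
  by move: yM; rewrite -xy ltnNge xM.
- have -> : x = y by lia.
  by split=> // _; apply: rst_refl.
Qed.

(** * The graph of a smoothed closed braid *)

Definition diagram_edges n c (pos : nat -> nat) (b : nat -> bool) :=
  flatten [seq level_edges n t (pos t) (b t) | t <- iota 0 c] ++ closure_edges n c.

Lemma state_loopsE n w st :
  state_loops n w st =
  ncomponents ((size w).+1 * n)
    (diagram_edges n (size w) (fun t => (nth (0%N, true) w t).1) (nth false st)).
Proof. by []. Qed.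

Definition straight (pos : nat -> nat) (b : nat -> bool) t p :=
  ~~ b t || (p != (pos t).-1) && (p != pos t).

Section DiagramEdges.
Variables (n c : nat) (pos : nat -> nat) (b : nat -> bool).
Hypothesis pos_range : forall t, (t < c)%N -> (0 < pos t < n)%N.

Lemma diagram_edges_ind (P : nat -> nat -> Prop) :
  (forall t p, (t < c)%N -> (p < n)%N -> straight pos b t p ->
      P (vtx n t p) (vtx n t.+1 p)) ->
  (forall t, (t < c)%N -> b t ->
      P (vtx n t (pos t).-1) (vtx n t (pos t)) /\
      P (vtx n t.+1 (pos t).-1) (vtx n t.+1 (pos t))) ->
  (forall p, (p < n)%N -> P (vtx n c p) (vtx n 0 p)) ->
  forall u v, (u, v) \in diagram_edges n c pos b -> P u v.
Proof.
move=> Pstraight Pcupcap Pclosure u v; rewrite mem_cat => /orP [|].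
- move=> /flattenP [_ /mapP [t + ->]]; rewrite mem_iota add0n /= => tc.
  have /andP [pos_gt0 pos_lt] := pos_range tc.
  rewrite /level_edges mem_cat => /orP [|].
    move=> /mapP [p]; rewrite mem_filter mem_iota add0n /= => /andP [away pn] [-> ->].
    by apply: Pstraight; rewrite // /straight away orbT.
  case bt: (b t); rewrite !in_cons in_nil orbF => /orP [] /eqP [-> ->];
    try by case: (Pcupcap t tc bt).
  1,2: by apply: Pstraight; rewrite ?/straight ?bt //; lia.
- by move=> /mapP [p]; rewrite mem_iota add0n /= => pn [-> ->]; apply: Pclosure.
Qed.

Lemma straight_edge t p : (t < c)%N -> (p < n)%N -> straight pos b t p ->
  (vtx n t p, vtx n t.+1 p) \in diagram_edges n c pos b.
Proof.
move=> tc pn tp; rewrite mem_cat; apply/orP; left.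
apply/flattenP; exists (level_edges n t (pos t) (b t)).
  by apply/mapP; exists t; rewrite ?mem_iota.
rewrite /level_edges mem_cat; case away: ((p != (pos t).-1) && (p != pos t)).
  by apply/orP; left; apply/mapP; exists p; rewrite // mem_filter away mem_iota.
move: tp; rewrite /straight away orbF => /negbTE bt.
move/negbT: away; rewrite negb_and !negbK bt !in_cons => /orP [] /eqP ->;
  by rewrite eqxx ?orbT.
Qed.

Lemma cupcap_edges t : (t < c)%N -> b t ->
  (vtx n t (pos t).-1, vtx n t (pos t)) \in diagram_edges n c pos b /\
  (vtx n t.+1 (pos t).-1, vtx n t.+1 (pos t)) \in diagram_edges n c pos b.
Proof.
move=> tc bt; have level_t :
    level_edges n t (pos t) (b t) \in [seq level_edges n s (pos s) (b s) | s <- iota 0 c].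
  by apply: map_f; rewrite mem_iota.
split; rewrite mem_cat; apply/orP; left; apply/flattenP; exists (level_edges n t (pos t) (b t));
  by rewrite // /level_edges mem_cat bt !in_cons eqxx ?orbT.
Qed.

Lemma closure_edge p :
  (p < n)%N -> (vtx n c p, vtx n 0 p) \in diagram_edges n c pos b.
Proof.
by move=> pn; rewrite mem_cat; apply/orP; right; apply/mapP; exists p; rewrite ?mem_iota.
Qed.

End DiagramEdges.

Lemma vtx_lt n t p T : (p < n)%N -> (vtx n t p < T * n)%N = (t < T)%N.
Proof.
move=> pn; rewrite /vtx; apply/idP/idP => [vtxT|tT].
- rewrite ltnNge; apply/negP => Tt.
  have : (T * n <= t * n)%N by apply: leq_mul.
  lia.
- have : (t.+1 * n <= T * n)%N by apply: leq_mul.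
  rewrite mulSn; lia.
Qed.

Lemma vtx_divn n t p : (p < n)%N -> (vtx n t p %/ n)%N = t.
Proof.
move=> pn; have n_gt0 : (0 < n)%N by case: n pn.
by rewrite /vtx divnMDl // divn_small // addn0.
Qed.

Lemma vtx_modn n t p : (p < n)%N -> (vtx n t p %% n)%N = p.
Proof. by move=> pn; rewrite /vtx modnMDl modn_small. Qed.

Lemma vtx_bound n c t p : (t <= c)%N -> (p < n)%N -> (vtx n t p < c.+1 * n)%N.
Proof. by move=> tc pn; rewrite vtx_lt. Qed.

Lemma vtxP n c x :
  (x < c.+1 * n)%N -> exists t p, [/\ (t <= c)%N, (p < n)%N & x = vtx n t p].
Proof.
move=> xN; have n_gt0 : (0 < n)%N by case: n xN => [|//]; rewrite muln0.
have x_vtx : x = vtx n (x %/ n) (x %% n) by rewrite /vtx -divn_eq.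
exists (x %/ n), (x %% n); split=> //; last by rewrite ltn_pmod.
by rewrite -ltnS -(@vtx_lt n _ (x %% n)) ?ltn_pmod // -x_vtx.
Qed.

Lemma diagram_edges_within n c pos b :
  (forall t, (t < c)%N -> (0 < pos t < n)%N) ->
  edges_within (c.+1 * n) (diagram_edges n c pos b).
Proof.
move=> pos_range [u v] /=.
apply: (diagram_edges_ind pos_range (P := fun u v => (u < _)%N /\ (v < _)%N)).
- by move=> t p tc pn _; split; apply: vtx_bound => //; lia.
- by move=> t tc _; have := pos_range t tc; split; split; apply: vtx_bound => //; lia.
- by move=> p pn; split; apply: vtx_bound.
Qed.

Lemma eq_diagram_edges n c pos pos' b b' :
  (forall t, (t < c)%N -> pos t = pos' t) -> (forall t, (t < c)%N -> b t = b' t) ->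
  diagram_edges n c pos b = diagram_edges n c pos' b'.
Proof.
move=> pos_eq b_eq; rewrite /diagram_edges; congr (flatten _ ++ _).
by apply/eq_in_map => t; rewrite mem_iota add0n => /= tc; rewrite pos_eq ?b_eq.
Qed.

(** * Deleting levels of the diagram *)

Definition relevel n (f : nat -> nat) x := vtx n (f (x %/ n)) (x %% n).

Lemma relevel_vtx n f t p : (p < n)%N -> relevel n f (vtx n t p) = vtx n (f t) p.
Proof. by move=> pn; rewrite /relevel vtx_divn ?vtx_modn. Qed.

Ltac bump_lia := rewrite /bump /unbump; lia.

Section DropIdentityLevel.
Variables (n c t0 : nat) (pos : nat -> nat) (b : nat -> bool).
Hypothesis pos_range : forall t, (t < c.+1)%N -> (0 < pos t < n)%N.
Hypothesis t0c : (t0 < c.+1)%N.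
Hypothesis b_t0 : b t0 = false.

Let pos' t := pos (bump t0 t).
Let b' t := b (bump t0 t).
Let E := diagram_edges n c.+1 pos b.
Let E' := diagram_edges n c pos' b'.
Let phi := relevel n (unbump t0).
Let psi := relevel n (bump t0.+1).

Let pos'_range t : (t < c)%N -> (0 < pos' t < n)%N.
Proof. by move=> tc; apply: pos_range; bump_lia. Qed.

Let identity_level_straight p : straight pos b t0 p.
Proof. by rewrite /straight b_t0. Qed.

Let unbumpS t : t != t0 -> unbump t0 t.+1 = (unbump t0 t).+1.
Proof. by move=> tt0; bump_lia. Qed.

Let phi_edge u v : (u, v) \in E -> linked E' (phi u) (phi v).
Proof.
move: u v; apply: (diagram_edges_ind pos_range (P := fun u v => linked E' (phi u) (phi v))).
- move=> t p tc pn tp; rewrite /phi !relevel_vtx //.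
  have [->|tt0] := eqVneq t t0.
    have -> : unbump t0 t0.+1 = unbump t0 t0 by bump_lia.
    exact: rst_refl.
  rewrite unbumpS //; apply/linked_edge/straight_edge => //; first bump_lia.
  by rewrite /straight /pos' /b' unbumpK.
- move=> t tc bt; have tt0 : t != t0 by apply: contraTneq bt => ->; rewrite b_t0.
  have [top bot] := @cupcap_edges n c pos' b' (unbump t0 t)
    ltac:(bump_lia) ltac:(by rewrite /b' unbumpK).
  have pos_t := pos_range tc.
  have pos't : pos' (unbump t0 t) = pos t by rewrite /pos' unbumpK.
  rewrite /phi !relevel_vtx ?unbumpS //; try lia.
  by rewrite pos't in top bot; split; apply: linked_edge.
- move=> p pn; rewrite /phi !relevel_vtx //.
  have -> : unbump t0 c.+1 = c by bump_lia.
  by apply/linked_edge; rewrite /unbump /=; apply: closure_edge.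
Qed.

Let bumpS t : t != t0 -> bump t0.+1 t = bump t0 t /\ bump t0.+1 t.+1 = (bump t0 t).+1.
Proof. by move=> tt0; split; bump_lia. Qed.

Let identity_edge p : (p < n)%N -> linked E (vtx n t0 p) (vtx n t0.+1 p).
Proof. by move=> pn; apply/linked_edge/straight_edge. Qed.

Let bump_t0 : bump t0 t0 = t0.+1.
Proof. by bump_lia. Qed.

Let psi_edge u v : (u, v) \in E' -> linked E (psi u) (psi v).
Proof.
move: u v; apply: (diagram_edges_ind pos'_range (P := fun u v => linked E (psi u) (psi v))).
- move=> t p tc pn tp; rewrite /psi !relevel_vtx //.
  have [tt0|tt0] := eqVneq t t0; first subst t.
    have -> : bump t0.+1 t0 = t0 by bump_lia.
    have -> : bump t0.+1 t0.+1 = t0.+2 by bump_lia.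
    apply: rst_trans (identity_edge pn) (linked_edge _).
    by apply: straight_edge; rewrite // -bump_t0.
  have [-> ->] := bumpS tt0.
  by apply/linked_edge/straight_edge => //; bump_lia.
- move=> t tc bt; have pos_t := pos'_range tc; rewrite /psi !relevel_vtx; try lia.
  have [tt0|tt0] := eqVneq t t0; first subst t.
    have -> : bump t0.+1 t0 = t0 by bump_lia.
    have -> : bump t0.+1 t0.+1 = t0.+2 by bump_lia.
    have [top bot] := @cupcap_edges n c.+1 pos b t0.+1 ltac:(lia) ltac:(by rewrite -bump_t0).
    rewrite /pos' bump_t0 in pos_t *; split; last exact: linked_edge.
    have down_left := identity_edge (p := (pos t0.+1).-1) ltac:(lia).
    have down_right := identity_edge (p := pos t0.+1) ltac:(lia).
    apply: rst_trans down_left _; apply: rst_trans (linked_edge top) _.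
    exact: rst_sym.
  have [-> ->] := bumpS tt0.
  have [top bot] := @cupcap_edges n c.+1 pos b (bump t0 t) ltac:(bump_lia) bt.
  by split; apply: linked_edge.
- move=> p pn; rewrite /psi !relevel_vtx // [bump _ 0]/bump add0n.
  have [ct0|ct0] := eqVneq c t0; first subst c.
    have -> : bump t0.+1 t0 = t0 by bump_lia.
    by apply: rst_trans (identity_edge pn) (linked_edge _); apply: closure_edge.
  have -> : bump t0.+1 c = c.+1 by bump_lia.
  by apply/linked_edge/closure_edge.
Qed.

Let phi_range x : (x < c.+2 * n)%N -> (phi x < c.+1 * n)%N.
Proof. by move=> /vtxP [t [p [tc pn ->]]]; rewrite /phi relevel_vtx // vtx_bound //; bump_lia. Qed.

Let psi_range y : (y < c.+1 * n)%N -> (psi y < c.+2 * n)%N.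
Proof. by move=> /vtxP [t [p [tc pn ->]]]; rewrite /psi relevel_vtx // vtx_bound //; bump_lia. Qed.

Let psi_phi x : (x < c.+2 * n)%N -> linked E x (psi (phi x)).
Proof.
move=> /vtxP [t [p [tc pn ->]]]; rewrite /phi /psi !relevel_vtx //.
have [->|tt0] := eqVneq t t0.+1.
  have -> : bump t0.+1 (unbump t0 t0.+1) = t0 by bump_lia.
  exact/rst_sym/identity_edge.
have -> : bump t0.+1 (unbump t0 t) = t by bump_lia.
exact: rst_refl.
Qed.

Let phi_psi y : (y < c.+1 * n)%N -> linked E' y (phi (psi y)).
Proof.
move=> /vtxP [t [p [tc pn ->]]]; rewrite /phi /psi !relevel_vtx //.
have -> : unbump t0 (bump t0.+1 t) = t by bump_lia.
exact: rst_refl.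
Qed.

Lemma ncomponents_drop_identity_level :
  ncomponents (c.+2 * n) E = ncomponents (c.+1 * n) E'.
Proof.
apply: (ncomponents_iso (phi := phi) (psi := psi)) => //;
  exact: diagram_edges_within.
Qed.

End DropIdentityLevel.

(* Two consecutive cup-caps at the same position enclose a small loop:
   removing the second one removes exactly that loop, whose two vertices
   [phi] sends to the new isolated vertex [K]. *)
Section DropCupcapPair.
Variables (n c t0 : nat) (pos : nat -> nat) (b : nat -> bool).
Hypothesis pos_range : forall t, (t < c.+2)%N -> (0 < pos t < n)%N.
Hypothesis t0c : (t0 < c.+1)%N.
Hypothesis b_t0 : b t0.
Hypothesis b_t0S : b t0.+1.
Hypothesis pos_t0S : pos t0.+1 = pos t0.

Let i := pos t0.
Let pos' t := pos (bump t0.+1 t).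
Let b' t := b (bump t0.+1 t).
Let E := diagram_edges n c.+2 pos b.
Let E' := diagram_edges n c.+1 pos' b'.
Let K := (c.+2 * n)%N.
Let on_small_loop x := (x %/ n == t0.+1) && ((x %% n == i.-1) || (x %% n == i)).
Let phi x := if on_small_loop x then K else relevel n (unbump t0) x.
Let psi y := if y == K then vtx n t0.+1 i.-1 else relevel n (bump t0.+1) y.

Let i_range : (0 < i < n)%N.
Proof. by apply: pos_range; lia. Qed.

Let pos'_range t : (t < c.+1)%N -> (0 < pos' t < n)%N.
Proof. by move=> tc; apply: pos_range; bump_lia. Qed.

Let phi_vtx t p : (p < n)%N -> phi (vtx n t p) =
  if (t == t0.+1) && ((p == i.-1) || (p == i)) then K else vtx n (unbump t0 t) p.
Proof. by move=> pn; rewrite /phi /on_small_loop relevel_vtx // vtx_divn ?vtx_modn. Qed.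

Let phi_off t p : (p < n)%N -> t != t0.+1 -> phi (vtx n t p) = vtx n (unbump t0 t) p.
Proof. by move=> pn /negbTE tt0; rewrite phi_vtx // tt0. Qed.

Let psi_vtx t p : (t <= c.+1)%N -> (p < n)%N -> psi (vtx n t p) = vtx n (bump t0.+1 t) p.
Proof.
move=> tc pn; rewrite /psi relevel_vtx //.
by have := vtx_bound tc pn; rewrite /K; case: eqP => // ->; rewrite ltnn.
Qed.

Let phi_t0S p : (p < n)%N -> ~~ ((p == i.-1) || (p == i)) -> phi (vtx n t0.+1 p) = vtx n t0 p.
Proof. by move=> pn /negbTE off; rewrite phi_vtx // eqxx off /= /unbump ltnSn subn1. Qed.

Let phi_loop p : (p < n)%N -> (p == i.-1) || (p == i) -> phi (vtx n t0.+1 p) = K.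
Proof. by move=> pn on; rewrite phi_vtx // eqxx on. Qed.

Let straight_t0 p : straight pos b t0 p = ~~ ((p == i.-1) || (p == i)).
Proof. by rewrite /straight b_t0 negb_or. Qed.

Let straight_t0S p : straight pos b t0.+1 p = ~~ ((p == i.-1) || (p == i)).
Proof. by rewrite /straight b_t0S pos_t0S negb_or. Qed.

Let straight'_t0 p : straight pos' b' t0 p = ~~ ((p == i.-1) || (p == i)).
Proof. by rewrite /straight /pos' /b' [bump _ t0]/bump ltnn add0n b_t0 negb_or. Qed.

Let pos'_t0 : pos' t0 = i.
Proof. by rewrite /pos' /bump ltnn. Qed.

Let b'_t0 : b' t0.
Proof. by rewrite /b' /bump ltnn. Qed.

Let unbump_level t : t != t0 -> t != t0.+1 ->
  unbump t0 t.+1 = (unbump t0 t).+1 /\ bump t0.+1 (unbump t0 t) = t.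
Proof. by move=> tt0 tt0S; split; bump_lia. Qed.

Let phi_edge u v : (u, v) \in E -> linked E' (phi u) (phi v).
Proof.
move: u v; apply: (diagram_edges_ind pos_range (P := fun u v => linked E' (phi u) (phi v))).
- move=> t p tc pn tp.
  have [tt0|tt0] := eqVneq t t0; first subst t.
    rewrite straight_t0 in tp; rewrite phi_t0S // phi_off //; last by rewrite ltn_eqF.
    have -> : unbump t0 t0 = t0 by bump_lia.
    exact: rst_refl.
  have [tt0S|tt0S] := eqVneq t t0.+1; first subst t.
    rewrite straight_t0S in tp; rewrite phi_t0S // phi_off //.
    have -> : unbump t0 t0.+2 = t0.+1 by bump_lia.
    by apply/linked_edge/straight_edge; rewrite ?straight'_t0 //; lia.
  have [unbumpS unbumpK'] := unbump_level tt0 tt0S.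
  rewrite phi_off // phi_off ?eqSS // unbumpS.
  apply/linked_edge/straight_edge => //; first bump_lia.
  by rewrite /straight /pos' /b' unbumpK'.
- move=> t tc bt; have [pos_gt0 pos_lt] := andP (pos_range tc).
  have [tt0|tt0] := eqVneq t t0; first subst t.
    have [top _] := @cupcap_edges n c.+1 pos' b' t0 ltac:(done) b'_t0.
    rewrite pos'_t0 in top.
    rewrite !phi_loop ?eqxx ?orbT //; last lia.
    rewrite !phi_off ?ltn_eqF //; last lia.
    have -> : unbump t0 t0 = t0 by bump_lia.
    by split; [apply: linked_edge | apply: rst_refl].
  have [tt0S|tt0S] := eqVneq t t0.+1; first subst t.
    have [_ bot] := @cupcap_edges n c.+1 pos' b' t0 ltac:(done) b'_t0.
    rewrite pos'_t0 in bot.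
    rewrite pos_t0S in pos_gt0 pos_lt *; rewrite !phi_loop ?eqxx ?orbT //; last lia.
    rewrite !phi_off //; last lia.
    have -> : unbump t0 t0.+2 = t0.+1 by bump_lia.
    by split; [apply: rst_refl | apply: linked_edge].
  have [unbumpS unbumpK'] := unbump_level tt0 tt0S.
  have [top bot] := @cupcap_edges n c.+1 pos' b' (unbump t0 t)
    ltac:(bump_lia) ltac:(by rewrite /b' unbumpK').
  rewrite /pos' unbumpK' in top bot.
  rewrite !phi_off ?eqSS //; try lia.
  by rewrite unbumpS; split; apply: linked_edge.
- move=> p pn; rewrite !phi_off //; last lia.
  have -> : unbump t0 c.+2 = c.+1 by bump_lia.
  by apply/linked_edge/closure_edge.
Qed.

Let bump_level t : t != t0 -> bump t0.+1 t.+1 = (bump t0.+1 t).+1.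
Proof. by move=> tt0; bump_lia. Qed.

Let bump_t0 : bump t0.+1 t0 = t0.
Proof. by bump_lia. Qed.

Let psi_edge u v : (u, v) \in E' -> linked E (psi u) (psi v).
Proof.
move: u v; apply: (diagram_edges_ind pos'_range (P := fun u v => linked E (psi u) (psi v))).
- move=> t p tc pn tp; rewrite !psi_vtx //; try lia.
  have [tt0|tt0] := eqVneq t t0; first subst t.
    rewrite straight'_t0 in tp; rewrite bump_t0.
    have -> : bump t0.+1 t0.+1 = t0.+2 by bump_lia.
    apply: rst_trans (linked_edge (straight_edge _ _ _)) (linked_edge (straight_edge _ _ _));
      by rewrite ?straight_t0 ?straight_t0S //; lia.
  by rewrite bump_level //; apply/linked_edge/straight_edge => //; bump_lia.
- move=> t tc bt; have [pos_gt0 pos_lt] := andP (pos'_range tc).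
  rewrite !psi_vtx //; try lia.
  have [tt0|tt0] := eqVneq t t0; first subst t.
    have [top _] := @cupcap_edges n c.+2 pos b t0 ltac:(lia) b_t0.
    have [_ bot] := @cupcap_edges n c.+2 pos b t0.+1 ltac:(lia) b_t0S.
    rewrite pos_t0S in bot; rewrite pos'_t0 bump_t0.
    have -> : bump t0.+1 t0.+1 = t0.+2 by bump_lia.
    by split; apply: linked_edge.
  have [top bot] := @cupcap_edges n c.+2 pos b (bump t0.+1 t) ltac:(bump_lia) bt.
  by rewrite bump_level //; split; apply: linked_edge.
- move=> p pn; rewrite !psi_vtx //.
  have -> : bump t0.+1 c.+1 = c.+2 by bump_lia.
  by apply/linked_edge/closure_edge.
Qed.

Let phi_range x : (x < c.+3 * n)%N -> (phi x < K.+1)%N.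
Proof.
move=> /vtxP [t [p [tc pn ->]]]; rewrite phi_vtx //.
by case: ifP => // _; rewrite ltnS ltnW // vtx_bound //; bump_lia.
Qed.

Let psi_range y : (y < K.+1)%N -> (psi y < c.+3 * n)%N.
Proof.
rewrite ltnS leq_eqVlt => /predU1P [->|]; last rewrite /K.
  by rewrite /psi eqxx vtx_bound //; lia.
by move=> /vtxP [t [p [tc pn ->]]]; rewrite psi_vtx // vtx_bound //; bump_lia.
Qed.

Let psi_phi x : (x < c.+3 * n)%N -> linked E x (psi (phi x)).
Proof.
move=> /vtxP [t [p [tc pn ->]]].
have [tt0S|tt0S] := eqVneq t t0.+1; first subst t.
  case: (boolP ((p == i.-1) || (p == i))) => [on|off].
    rewrite phi_loop // /psi eqxx.
    have [top bot] := @cupcap_edges n c.+2 pos b t0 ltac:(lia) b_t0.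
    by case/orP: on => /eqP ->; [apply: rst_refl | apply: linked_edgeV].
  rewrite phi_t0S // psi_vtx //; try lia.
  by rewrite bump_t0; apply/linked_edgeV/straight_edge; rewrite ?straight_t0 //; lia.
rewrite phi_off // psi_vtx //; try bump_lia.
have -> : bump t0.+1 (unbump t0 t) = t by bump_lia.
exact: rst_refl.
Qed.

Let phi_psi y : (y < K.+1)%N -> linked E' y (phi (psi y)).
Proof.
rewrite ltnS leq_eqVlt => /predU1P [->|]; last rewrite /K.
  by rewrite /psi eqxx phi_loop ?eqxx //; [apply: rst_refl | lia].
move=> /vtxP [t [p [tc pn ->]]]; rewrite psi_vtx // phi_off //; last bump_lia.
have -> : unbump t0 (bump t0.+1 t) = t by bump_lia.
exact: rst_refl.
Qed.

Lemma ncomponents_drop_cupcap_pair :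
  ncomponents (c.+3 * n) E = (ncomponents (c.+2 * n) E').+1.
Proof.
have E_within : edges_within (c.+3 * n) E by apply: diagram_edges_within.
have E'_within : edges_within K E' by apply: diagram_edges_within.
rewrite -ncomponents_isolated //; apply: (ncomponents_iso (phi := phi) (psi := psi)) => //.
by move=> e /E'_within [? ?]; split; apply: ltnW.
Qed.

End DropCupcapPair.

(** * Loops of smoothed braid words *)

Definition letters_in n (w : seq letter) := all (fun l : letter => (0 < l.1 < n)%N) w.

Lemma letters_in_cat n w1 w2 : letters_in n (w1 ++ w2) = letters_in n w1 && letters_in n w2.
Proof. exact: all_cat. Qed.

Lemma letters_in_cons n l w : letters_in n (l :: w) = (0 < l.1 < n)%N && letters_in n w.
Proof. by []. Qed.

Lemma nth_bump (T : Type) (x0 : T) (P Q : seq T) l t :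
  nth x0 (P ++ Q) t = nth x0 (P ++ l :: Q) (bump (size P) t).
Proof.
rewrite !nth_cat /bump; case: ltnP => tP; first by rewrite add0n tP.
by rewrite add1n ltnNge leqW //= subSn.
Qed.

Section Loops.
Variable n : nat.

Lemma state_loops_positions w w' st :
  map fst w = map fst w' -> state_loops n w st = state_loops n w' st.
Proof.
move=> ww'; have size_ww' : size w = size w' by rewrite -(size_map fst w) ww' size_map.
have pos_ww' t : (nth (0%N, true) w t).1 = (nth (0%N, true) w' t).1.
  case: (ltnP t (size w)) => tw; last by rewrite !nth_default // -size_ww'.
  by rewrite -!(nth_map (0%N, true) 0%N fst) ?ww' // -size_ww'.
rewrite !state_loopsE size_ww' /diagram_edges.
by congr (ncomponents _ (flatten _ ++ _)); apply: eq_map => t; rewrite pos_ww'.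
Qed.

Lemma letters_in_nth w t :
  letters_in n w -> (t < size w)%N -> (0 < (nth (0%N, true) w t).1 < n)%N.
Proof. by move=> /all_nthP; apply. Qed.

Lemma state_loops_drop_identity P l Q sP sQ :
  size sP = size P -> letters_in n (P ++ l :: Q) ->
  state_loops n (P ++ l :: Q) (sP ++ false :: sQ) = state_loops n (P ++ Q) (sP ++ sQ).
Proof.
move=> size_sP PlQ_in; rewrite !state_loopsE !size_cat /= addnS.
rewrite (@ncomponents_drop_identity_level _ _ (size P)).
- congr ncomponents; apply: eq_diagram_edges => t _.
    by rewrite (nth_bump _ P Q l).
  by rewrite (nth_bump _ sP sQ false) size_sP.
- by move=> t tPQ; apply: letters_in_nth; rewrite // size_cat /= addnS.
- by rewrite ltnS leq_addr.
- by rewrite nth_cat size_sP ltnn subnn.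
Qed.

Lemma state_loops_drop_cupcap P l1 l2 Q sP sQ :
  size sP = size P -> l2.1 = l1.1 -> letters_in n (P ++ l1 :: l2 :: Q) ->
  state_loops n (P ++ l1 :: l2 :: Q) (sP ++ true :: true :: sQ) =
  (state_loops n (P ++ l1 :: Q) (sP ++ true :: sQ)).+1.
Proof.
move=> size_sP l21 PQ_in; rewrite !state_loopsE !size_cat /= !addnS.
rewrite (@ncomponents_drop_cupcap_pair _ _ (size P)).
- congr (ncomponents _ _).+1; apply: eq_diagram_edges => t _.
    rewrite -[P ++ _ :: _ :: _]cat_rcons -[P ++ l1 :: Q]cat_rcons.
    by rewrite (nth_bump _ _ Q l2) size_rcons.
  rewrite -[sP ++ _ :: _ :: _]cat_rcons -[sP ++ true :: sQ]cat_rcons.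
  by rewrite (nth_bump _ _ sQ true) size_rcons size_sP.
- by move=> t tPQ; apply: letters_in_nth; rewrite // size_cat /= !addnS.
- by rewrite ltnS leq_addr.
- by rewrite nth_cat size_sP ltnn subnn.
- by rewrite nth_cat size_sP ltnNge leqnSn /= subSn // subnn.
- by rewrite !nth_cat ltnn ltnNge leqnSn /= subSn // subnn.
Qed.

Lemma state_loops_gt0 w st : (0 < n)%N -> letters_in n w -> (0 < state_loops n w st)%N.
Proof.
move=> n_gt0 w_in; rewrite state_loopsE /ncomponents.
set E := diagram_edges _ _ _ _.
have E_within : edges_within ((size w).+1 * n) E.
  by apply: diagram_edges_within => t tw; apply: letters_in_nth.
have [size_lab _] := component_labels_ncomponents E_within.
case: (foldl _ _ _) size_lab => [|x lab] size_lab; first by move: size_lab; rewrite /= mulSn; lia.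
have : x \in undup (x :: lab) by rewrite mem_undup mem_head.
by case: undup.
Qed.

End Loops.

(** * Expanding crossings *)

Local Open Scope ring_scope.

Lemma lcoef_cat p q k : lcoef (p ++ q) k = lcoef p k + lcoef q k.
Proof. by elim: p => [|m p IH] /=; rewrite ?add0r // IH; case: ifP; rewrite ?addrA. Qed.

Lemma lcoef_flatten (ps : seq laurent) k : lcoef (flatten ps) k = \sum_(p <- ps) lcoef p k.
Proof. by elim: ps => [|p ps IH]; rewrite ?big_nil ?big_cons //= lcoef_cat IH. Qed.

Lemma lcoef_monomial_mul e c q k : lcoef (lmul [:: (e, c)] q) k = c * lcoef q (k - e).
Proof.
rewrite /lmul /= cats0; elim: q => [|m q IH] /=; first by rewrite mulr0.
rewrite IH (_ : (e + m.1 == k) = (m.1 == k - e)); last by rewrite [RHS]eq_sym subr_eq addrC.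
by case: ifP; rewrite ?mulrDr.
Qed.

Definition delta_coef (L : nat) (j : int) := lcoef (lpow ldelta L) j.

Lemma delta_coefS L j : delta_coef L.+1 j = - delta_coef L (j - 1) - delta_coef L (j + 1).
Proof.
rewrite /delta_coef /lpow iterS -/(lpow ldelta L).
have -> : lmul ldelta (lpow ldelta L) =
    lmul [:: (1, -1)] (lpow ldelta L) ++ lmul [:: (-1, -1)] (lpow ldelta L).
  by rewrite /lmul /= !cats0.
by rewrite lcoef_cat !lcoef_monomial_mul !mulN1r opprK.
Qed.

Definition letter_sign (l : letter) : int := if l.2 then 1 else -1.

Definition letter_exp (l : letter) (b : bool) : int :=
  if b then letter_sign l *+ 2 else letter_sign l.

Definition state_exp (w : seq letter) (st : seq bool) : int :=
  \sum_(lb <- zip w st) letter_exp lb.1 lb.2.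

Lemma state_weightE w st :
  state_weight w st = [:: (state_exp w st, (-1) ^+ size (zip w st))].
Proof.
rewrite /state_weight /state_exp; elim: (zip w st) => [|[l b] zs IH]; first by rewrite big_nil.
by rewrite /= IH big_cons /= /lmul /= exprS; case: b.
Qed.

Lemma state_exp_cat P Q sP sQ :
  size sP = size P -> state_exp (P ++ Q) (sP ++ sQ) = state_exp P sP + state_exp Q sQ.
Proof. by move=> size_sP; rewrite /state_exp zip_cat // big_cat. Qed.

Lemma state_exp_cons l b Q sQ : state_exp (l :: Q) (b :: sQ) = letter_exp l b + state_exp Q sQ.
Proof. by rewrite /state_exp /= big_cons. Qed.

Lemma all_states_size k s : s \in all_states k -> size s = k.
Proof.
elim: k s => [|k IH] s /=; first by rewrite mem_seq1 => /eqP ->.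
by rewrite cats0 mem_cat => /orP [] /mapP [s' /IH <- ->].
Qed.

Lemma big_all_states_cat (F : seq bool -> int) m k :
  \sum_(s <- all_states (m + k)) F s =
  \sum_(s1 <- all_states m) \sum_(s2 <- all_states k) F (s1 ++ s2).
Proof.
elim: m F => [|m IH] F; first by rewrite add0n /= big_seq1.
by rewrite addSn /= !cats0 !big_cat /= !big_map !IH.
Qed.

Definition jones_word n (w : seq letter) : laurent :=
  lsum [seq lmul (state_weight w st) (lpow ldelta (state_loops n w st).-1)
       | st <- all_states (size w)].

Lemma jonesE n w : jones n w = jones_word n (braid_word w).
Proof. by []. Qed.

Lemma lcoef_jones_word n w k :
  lcoef (jones_word n w) k =
  \sum_(st <- all_states (size w))
    (-1) ^+ size w * delta_coef (state_loops n w st).-1 (k - state_exp w st).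
Proof.
rewrite /jones_word /lsum lcoef_flatten big_map big_seq [RHS]big_seq.
apply: eq_bigr => st /all_states_size size_st.
by rewrite state_weightE lcoef_monomial_mul size_zip size_st minnn.
Qed.

Section Expansion.
Variables (n : nat) (P Q : seq letter) (i : nat).
Hypotheses (P_in : letters_in n P) (Q_in : letters_in n Q) (i_range : (0 < i < n)%N).

(* The coefficients of the bracket of the diagram [P e_i Q], in which the
   crossing between [P] and [Q] is replaced by the cup-cap [e_i]. *)
Definition cupcap_coef k :=
  \sum_(sP <- all_states (size P)) \sum_(sQ <- all_states (size Q))
    (-1) ^+ (size P + size Q) *
    delta_coef (state_loops n (P ++ (i, true) :: Q) (sP ++ true :: sQ)).-1
      (k - (state_exp P sP + state_exp Q sQ)).

Lemma lcoef_jones_word_cat k :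
  lcoef (jones_word n (P ++ Q)) k =
  \sum_(sP <- all_states (size P)) \sum_(sQ <- all_states (size Q))
    (-1) ^+ (size P + size Q) *
    delta_coef (state_loops n (P ++ Q) (sP ++ sQ)).-1 (k - (state_exp P sP + state_exp Q sQ)).
Proof.
rewrite lcoef_jones_word size_cat big_all_states_cat big_seq [RHS]big_seq.
apply: eq_bigr => sP /all_states_size size_sP; apply: eq_bigr => sQ _.
by rewrite state_exp_cat.
Qed.

Let letters_in_insert l : l.1 = i -> letters_in n (P ++ l :: Q).
Proof. by move=> li; rewrite letters_in_cat !letters_in_cons li i_range P_in Q_in. Qed.

Let letters_in_insert2 l : l.1 = i -> letters_in n (P ++ l :: l :: Q).
Proof. by move=> li; rewrite letters_in_cat !letters_in_cons li i_range P_in Q_in. Qed.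

(* The shifted indices are arguments, so that the lemma rewrites terms
   whose indices agree with them only up to ring arithmetic. *)
Lemma lcoef_jones_word_insert l k a b :
  l.1 = i -> a = k - letter_sign l -> b = k - letter_sign l *+ 2 ->
  lcoef (jones_word n (P ++ l :: Q)) k = - lcoef (jones_word n (P ++ Q)) a - cupcap_coef b.
Proof.
move=> li -> ->; rewrite lcoef_jones_word size_cat /= -add1n big_all_states_cat.
rewrite lcoef_jones_word_cat /cupcap_coef -sumrN -sumrB big_seq [RHS]big_seq.
apply: eq_bigr => sP /all_states_size size_sP.
rewrite big_all_states_cat /= !big_cons big_nil addr0 -sumrN -sumrB -big_split /=.
apply: eq_bigr => sQ _; rewrite -add1n addnCA exprD !state_exp_cat // !state_exp_cons.
rewrite state_loops_drop_identity ?letters_in_insert //.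
rewrite (@state_loops_positions n (P ++ l :: Q) (P ++ (i, true) :: Q)); last first.
  by rewrite !map_cat /= li.
rewrite /letter_exp; set e := letter_sign l.
set xP := state_exp P sP; set xQ := state_exp Q sQ.
have -> : k - (xP + (e + xQ)) = k - e - (xP + xQ) by ring.
have -> : k - (xP + (e *+ 2 + xQ)) = k - e *+ 2 - (xP + xQ) by ring.
ring.
Qed.

Lemma state_loops_insert2 l sP sQ : l.1 = i -> size sP = size P ->
  let L := state_loops n (P ++ (i, true) :: Q) (sP ++ true :: sQ) in
  [/\ state_loops n (P ++ l :: l :: Q) (sP ++ false :: false :: sQ) =
        state_loops n (P ++ Q) (sP ++ sQ),
      state_loops n (P ++ l :: l :: Q) (sP ++ false :: true :: sQ) = L,
      state_loops n (P ++ l :: l :: Q) (sP ++ true :: false :: sQ) = L &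
      state_loops n (P ++ l :: l :: Q) (sP ++ true :: true :: sQ) = L.+1].
Proof.
move=> li size_sP L; have PllQ_in := letters_in_insert2 li.
have loops_PlQ : state_loops n (P ++ l :: Q) (sP ++ true :: sQ) = L.
  by apply: state_loops_positions; rewrite !map_cat /= li.
split.
- by rewrite !state_loops_drop_identity ?letters_in_insert.
- by rewrite state_loops_drop_identity ?loops_PlQ.
- rewrite -[P ++ l :: l :: Q]cat_rcons -[sP ++ true :: false :: sQ]cat_rcons.
  by rewrite state_loops_drop_identity ?size_rcons ?size_sP ?cat_rcons ?loops_PlQ.
- by rewrite state_loops_drop_cupcap ?loops_PlQ.
Qed.

Lemma lcoef_jones_word_insert2 l k a b c d :
  let e := letter_sign l in
  l.1 = i -> a = k - e *+ 2 -> b = k - e *+ 3 -> c = k - e *+ 4 - 1 -> d = k - e *+ 4 + 1 ->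
  lcoef (jones_word n (P ++ l :: l :: Q)) k =
  lcoef (jones_word n (P ++ Q)) a + cupcap_coef b *+ 2 - cupcap_coef c - cupcap_coef d.
Proof.
move=> e li -> -> -> ->; have n_gt0 : (0 < n)%N by case/andP: i_range => _; apply: leq_trans.
rewrite lcoef_jones_word size_cat /= -(add2n (size Q)) big_all_states_cat.
rewrite lcoef_jones_word_cat /cupcap_coef -sumrMnl -big_split -!sumrB.
rewrite big_seq [RHS]big_seq; apply: eq_bigr => sP /all_states_size size_sP.
rewrite big_all_states_cat /= !big_cons big_nil addr0 -!big_split /=.
rewrite -sumrMnl -big_split -!sumrB; apply: eq_bigr => sQ _.
rewrite -add2n addnCA exprD !state_exp_cat // !state_exp_cons.
have [-> -> -> ->] := state_loops_insert2 sQ li size_sP.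
set L := state_loops n (P ++ (i, true) :: Q) _.
have -> : L = L.-1.+1 by rewrite prednK //; apply: state_loops_gt0 => //; apply: letters_in_insert.
rewrite delta_coefS /letter_exp -/e /=.
set xP := state_exp P sP; set xQ := state_exp Q sQ.
have -> : k - (xP + (e + (e + xQ))) = k - e *+ 2 - (xP + xQ) by ring.
have -> : k - (xP + (e + (e *+ 2 + xQ))) = k - e *+ 3 - (xP + xQ) by ring.
have -> : k - (xP + (e *+ 2 + (e + xQ))) = k - e *+ 3 - (xP + xQ) by ring.
have -> : k - (xP + (e *+ 2 + (e *+ 2 + xQ))) - 1 = k - e *+ 4 - 1 - (xP + xQ) by ring.
have -> : k - (xP + (e *+ 2 + (e *+ 2 + xQ))) + 1 = k - e *+ 4 + 1 - (xP + xQ) by ring.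
ring.
Qed.

Lemma skein_word_pos k :
  lcoef (jones_word n (P ++ (i, true) :: (i, true) :: Q)) k =
  lcoef (jones_word n (P ++ Q)) (k - 4) + lcoef (jones_word n (P ++ (i, true) :: Q)) (k - 3)
  - lcoef (jones_word n (P ++ (i, true) :: Q)) (k - 1).
Proof.
rewrite (@lcoef_jones_word_insert2 _ k (k - 2) (k - 3) (k - 5) (k - 3)) //.
rewrite (@lcoef_jones_word_insert _ (k - 3) (k - 4) (k - 5)) //.
rewrite (@lcoef_jones_word_insert _ (k - 1) (k - 2) (k - 3)) //.
all: rewrite /letter_sign /=; ring.
Qed.

Lemma skein_word_neg k :
  lcoef (jones_word n (P ++ Q)) k =
  lcoef (jones_word n (P ++ (i, false) :: (i, false) :: Q)) (k - 4)
  + lcoef (jones_word n (P ++ (i, false) :: Q)) (k - 3)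
  - lcoef (jones_word n (P ++ (i, false) :: Q)) (k - 1).
Proof.
rewrite (@lcoef_jones_word_insert2 _ (k - 4) (k - 2) (k - 1) (k - 1) (k + 1)) //.
rewrite (@lcoef_jones_word_insert _ (k - 3) (k - 2) (k - 1)) //.
rewrite (@lcoef_jones_word_insert _ (k - 1) k (k + 1)) //.
all: rewrite /letter_sign /=; ring.
Qed.

Lemma skein_word_mixed k :
  lcoef (jones_word n (P ++ (i, true) :: Q)) k =
  lcoef (jones_word n (P ++ (i, false) :: Q)) (k - 4)
  + lcoef (jones_word n (P ++ Q)) (k - 3) - lcoef (jones_word n (P ++ Q)) (k - 1).
Proof.
rewrite (@lcoef_jones_word_insert _ k (k - 1) (k - 2)) //.
rewrite (@lcoef_jones_word_insert _ (k - 4) (k - 3) (k - 2)) //.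
all: rewrite /letter_sign /=; ring.
Qed.

End Expansion.

Definition skein_step (p q r : laurent) :=
  forall k, lcoef r k = lcoef p (k - 4) + lcoef q (k - 3) - lcoef q (k - 1).

Lemma letters_in_braid_word n w :
  all (fun p => (0 < p.1 < n)%N) w -> letters_in n (braid_word w).
Proof.
elim: w => [//|[j a] w IH] /= /andP [jn w_in].
rewrite /braid_word /= -/(braid_word w) letters_in_cat IH // andbT.
by case: a => m; rewrite /letters_in all_nseq jn orbT.
Qed.

Lemma braid_word_insert alpha gamma i f :
  braid_word (alpha ++ (i, f) :: gamma) =
  braid_word alpha ++ gen_pow i f ++ braid_word gamma.
Proof. by rewrite /braid_word map_cat flatten_cat. Qed.

Lemma gen_pow_opp i m : gen_pow i (- m%:Z) = nseq m (i, false).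
Proof. by case: m. Qed.

Lemma skein_jones n alpha gamma i f :
  all (fun p => (0 < p.1 < n)%N) alpha -> all (fun p => (0 < p.1 < n)%N) gamma ->
  (0 < i < n)%N ->
  skein_step (jones n (alpha ++ (i, f) :: gamma)) (jones n (alpha ++ (i, f + 1) :: gamma))
             (jones n (alpha ++ (i, f + 2) :: gamma)).
Proof.
move=> /letters_in_braid_word alpha_in /letters_in_braid_word gamma_in i_range k.
rewrite !jonesE !braid_word_insert.
have gen_pow_in m b : letters_in n (nseq m (i, b) ++ braid_word gamma).
  by rewrite letters_in_cat gamma_in andbT /letters_in all_nseq i_range orbT.
case: f => [m|[|m]].
- have -> : m%:Z + 2 = m.+2 by lia.
  have -> : m%:Z + 1 = m.+1 by lia.
  by rewrite /= (skein_word_pos alpha_in (gen_pow_in m true) i_range).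
- have -> : Negz 0 + 2 = 1 by [].
  have -> : Negz 0 + 1 = 0 by [].
  by rewrite /= (skein_word_mixed alpha_in gamma_in i_range).
- have -> : Negz m.+1 = - (m.+2)%:Z by rewrite NegzE.
  have -> : - (m.+2)%:Z + 1 = - (m.+1)%:Z by lia.
  have -> : - (m.+2)%:Z + 2 = - m%:Z by lia.
  by rewrite !gen_pow_opp /= (skein_word_neg alpha_in (gen_pow_in m false) i_range).
Qed.

(** * Degrees *)

Lemma lcoef_notin p k : k \notin map fst p -> lcoef p k = 0.
Proof.
elim: p => [//|m p IH] /=; rewrite in_cons negb_or => /andP [km kp].
by rewrite eq_sym (negbTE km) IH.
Qed.

Lemma mem_lsupport p k : (k \in lsupport p) = (lcoef p k != 0).
Proof.
rewrite /lsupport mem_filter mem_undup andb_idr // => /negP nz.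
by apply/negPn/negP => /lcoef_notin /eqP.
Qed.

Lemma foldr_max_mem (R : realDomainType) (x : R) s : foldr Num.max x s \in x :: s.
Proof.
elim: s => [|y s IH] /=; first exact: mem_head.
rewrite /Num.max; case: ifP => _; rewrite !in_cons ?eqxx ?orbT //.
by move: IH; rewrite in_cons => /orP [->|->]; rewrite ?orbT.
Qed.

Lemma foldr_max_ge (R : realDomainType) (x : R) s y : y \in x :: s -> y <= foldr Num.max x s.
Proof.
elim: s y => [|z s IH] y /=; first by rewrite mem_seq1 => /eqP ->.
rewrite le_max !in_cons => /or3P [/eqP ->|/eqP ->|ys]; rewrite ?lexx ?orbT //.
- by rewrite IH ?mem_head ?orbT.
- by rewrite IH ?in_cons ?ys ?orbT.
Qed.

Lemma ldeg_ge p k : lcoef p k != 0 -> k <= ldeg p.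
Proof. by rewrite -mem_lsupport /ldeg; case: lsupport => // x s; apply: foldr_max_ge. Qed.

Lemma lcoef_gt_ldeg p k : ldeg p < k -> lcoef p k = 0.
Proof. by move=> deg_k; apply/eqP; apply: contraTT deg_k => /ldeg_ge; rewrite -leNgt. Qed.

Lemma llead_neq0 p : lsupport p != [::] -> llead p != 0.
Proof.
rewrite /llead -mem_lsupport /ldeg.
by case: lsupport => // x s _; apply: foldr_max_mem.
Qed.

Lemma ldeg_eq p d : lcoef p d != 0 -> (forall k, d < k -> lcoef p k = 0) -> ldeg p = d.
Proof.
move=> nz_d vanish; have supp : lsupport p != [::].
  by apply/eqP => supp0; move: nz_d; rewrite -mem_lsupport supp0.
apply/eqP; rewrite eq_le ldeg_ge // andbT leNgt.
by apply/negP => /vanish /eqP; apply/negP/llead_neq0.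
Qed.

Section SkeinStep.
Variables p q r : laurent.
Hypothesis pqr : skein_step p q r.

Lemma skein_step_top_first :
  lsupport p != [::] -> ldeg q <= ldeg p -> ldeg r = ldeg p + 4 /\ llead r = llead p.
Proof.
move=> supp_p deg_qp.
have top : lcoef r (ldeg p + 4) = llead p.
  rewrite pqr !(@lcoef_gt_ldeg q) ?addrK ?subr0 ?addr0 //; lia.
have deg_r : ldeg r = ldeg p + 4.
  apply: ldeg_eq => [|k k_gt]; first by rewrite top llead_neq0.
  by rewrite pqr !lcoef_gt_ldeg ?subr0 ?addr0 //; lia.
by rewrite /llead deg_r top.
Qed.

Lemma skein_step_top_second :
  lsupport q != [::] -> ldeg p + 1 < ldeg q -> ldeg r = ldeg q + 3 /\ llead r = llead q.
Proof.
move=> supp_q deg_pq.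
have top : lcoef r (ldeg q + 3) = llead q.
  rewrite pqr addrK (@lcoef_gt_ldeg p) ?(@lcoef_gt_ldeg q (_ - 1)) ?add0r ?subr0 //; lia.
have deg_r : ldeg r = ldeg q + 3.
  apply: ldeg_eq => [|k k_gt]; first by rewrite top llead_neq0.
  by rewrite pqr !lcoef_gt_ldeg ?subr0 ?addr0 //; lia.
by rewrite /llead deg_r top.
Qed.

End SkeinStep.

(* Once the degree fails to increase, the s^4-term wins once, and from then
   on the (s^3 - s)-term always wins, raising the degree by 3 each time. *)
Lemma skein_sequence_ldeg (V : nat -> laurent) :
  (forall m, lsupport (V m) != [::]) ->
  (forall m, skein_step (V m) (V m.+1) (V m.+2)) ->
  ldeg (V 1%N) <= ldeg (V 0%N) ->
  forall m, (1 <= m)%N ->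
  [/\ 1 + ldeg (V m) < ldeg (V m.+1),
      ldeg (V m.+1) = ldeg (V 0%N) + 3 * m.+1%:Z - 2 &
      llead (V m.+1) = llead (V 0%N)].
Proof.
move=> supp skein deg10; elim=> [//|[_ _|m IH _]].
  have [deg2 lead2] := skein_step_top_first (skein 0%N) (supp 0%N) deg10.
  by split=> //; rewrite deg2; lia.
have [gap_m deg_m lead_m] := IH isT.
have [deg lead] := skein_step_top_second (skein m.+1) (supp _) ltac:(by rewrite addrC).
by split; rewrite ?deg ?lead //; lia.
Qed.

(** * Jones polynomials do not vanish *)

(* At a primitive cube root of unity [omega], the loop value
   [-(omega + omega^-1)] is 1 and the weights of the two smoothings of each
   crossing sum to 1, so every Jones polynomial evaluates to 1 there.
   In ['F_7], 2 is such a root. *)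
Definition omega : 'F_7 := 2%:R.

Lemma omega_neq0 : omega != 0. Proof. by []. Qed.

Lemma omega_sum : - omega - omega ^+ 2 = 1. Proof. by apply/eqP. Qed.

Lemma omegaN1 : omega ^ (-1) = omega ^+ 2.
Proof. by rewrite -invr_expz expr1z; apply/eqP. Qed.

Lemma omegaN2 : omega ^ (-2) = omega.
Proof. by rewrite -invr_expz; apply/eqP. Qed.

Definition eval_omega (p : laurent) : 'F_7 := \sum_(m <- p) m.2%:~R * omega ^ m.1.

Lemma eval_omega_flatten ps : eval_omega (flatten ps) = \sum_(p <- ps) eval_omega p.
Proof.
elim: ps => [|p ps IH]; first by rewrite big_nil /eval_omega big_nil.
by rewrite big_cons -IH /eval_omega big_cat.
Qed.

Lemma eval_omega_lmul p q : eval_omega (lmul p q) = eval_omega p * eval_omega q.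
Proof.
rewrite /eval_omega /lmul big_allpairs_dep mulr_suml; apply: eq_bigr => a _.
rewrite mulr_sumr; apply: eq_bigr => b _ /=.
by rewrite intrM expfzDr ?omega_neq0 //; ring.
Qed.

Lemma eval_omega_lone : eval_omega lone = 1.
Proof. by rewrite /eval_omega big_seq1 mul1r expr0z. Qed.

Lemma eval_omega_lpow_delta L : eval_omega (lpow ldelta L) = 1.
Proof.
elim: L => [|L IH]; first exact: eval_omega_lone.
rewrite /lpow iterS eval_omega_lmul -/(lpow ldelta L) IH mulr1.
by rewrite /eval_omega !big_cons big_nil addr0 /= expr1z omegaN1 !mulN1r omega_sum.
Qed.

Lemma eval_omega_letter_weights l :
  eval_omega (letter_weight l false) + eval_omega (letter_weight l true) = 1.
Proof.
rewrite /eval_omega /letter_weight !big_seq1 /= !mulN1r.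
case: l.2 => /=; first by rewrite expr1z [omega ^ 2]/= omega_sum.
by rewrite omegaN1 omegaN2 addrC omega_sum.
Qed.

Lemma eval_omega_state_weights w :
  \sum_(st <- all_states (size w)) eval_omega (state_weight w st) = 1.
Proof.
elim: w => [|l w IH] /=; first by rewrite big_seq1 eval_omega_lone.
rewrite cats0 big_cat /= !big_map /state_weight /=.
under eq_bigr do rewrite eval_omega_lmul.
under [X in _ + X]eq_bigr do rewrite eval_omega_lmul.
by rewrite -!mulr_sumr -mulrDl eval_omega_letter_weights mul1r.
Qed.

Lemma eval_omega_jones n w : eval_omega (jones n w) = 1.
Proof.
rewrite jonesE /jones_word /lsum eval_omega_flatten big_map.
under eq_bigr do rewrite eval_omega_lmul eval_omega_lpow_delta mulr1.
exact: eval_omega_state_weights.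
Qed.

Lemma eval_omega_coefs p S : uniq S -> {subset map fst p <= S} ->
  eval_omega p = \sum_(k <- S) (lcoef p k)%:~R * omega ^ k.
Proof.
move=> S_uniq; elim: p => [|m p IH] pS.
  by rewrite /eval_omega big_nil big1 // => k _; rewrite mul0r.
rewrite /eval_omega big_cons -/(eval_omega p) IH; last first.
  by move=> k kp; apply: pS; rewrite /= in_cons kp orbT.
have mS : m.1 \in S by apply: pS; rewrite /= mem_head.
rewrite [RHS](bigD1_seq m.1) //= eqxx intrD mulrDl -addrA; congr (_ + _).
rewrite (bigD1_seq m.1) //=; congr (_ + _); apply: eq_bigr => k km.
by rewrite eq_sym (negbTE km).
Qed.

Lemma lsupport_jones n w : lsupport (jones n w) != [::].
Proof.
apply: contra_eq_neq (eval_omega_jones n w) => supp0.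
rewrite (@eval_omega_coefs _ (undup (map fst (jones n w)))) ?undup_uniq //; last first.
  by move=> k; rewrite mem_undup.
rewrite big1 // => k _.
have /eqP -> : lcoef (jones n w) k == 0 by rewrite -[_ == 0]negbK -mem_lsupport supp0.
by rewrite mul0r.
Qed.

Theorem proposition3p3 (n : nat) (alpha gamma : seq (nat * int)) (i : nat) (e : int) :
  all (fun p => (0 < p.1 < n)%N) alpha ->
  all (fun p => (0 < p.1 < n)%N) gamma ->
  (0 < i < n)%N ->
  ldeg (jones n (alpha ++ (i, e + 1) :: gamma)) <= ldeg (jones n (alpha ++ (i, e) :: gamma)) ->
  (forall m : nat, (1 <= m)%N ->
     1 + ldeg (jones n (alpha ++ (i, e + m%:Z) :: gamma))
       < ldeg (jones n (alpha ++ (i, e + m%:Z + 1) :: gamma))) /\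
  (forall m : nat, (2 <= m)%N ->
     ldeg (jones n (alpha ++ (i, e + m%:Z) :: gamma))
       = ldeg (jones n (alpha ++ (i, e) :: gamma)) + 3 * m%:Z - 2 /\
     llead (jones n (alpha ++ (i, e + m%:Z) :: gamma))
       = llead (jones n (alpha ++ (i, e) :: gamma))).
Proof.
move=> alpha_in gamma_in i_range deg10.
pose V (m : nat) := jones n (alpha ++ (i, e + m%:Z) :: gamma).
have VS m : e + m%:Z + 1 = e + m.+1%:Z by lia.
have skein m : skein_step (V m) (V m.+1) (V m.+2).
  rewrite /V -(VS m) (_ : e + m.+2%:Z = e + m%:Z + 2); last by lia.
  exact: skein_jones.
have := @skein_sequence_ldeg V (fun m => lsupport_jones _ _) skein.
rewrite /V addr0 => /(_ deg10) deg_V; split=> [m m_gt0|[|m] m_gt1 //].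
  by rewrite VS; case: (deg_V m m_gt0).
by case: (deg_V m ltac:(lia)).
Qed.
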